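(* Let $q>1$ and let $\rho$ be a positive $2\pi$-periodic $C^2$ function with $(\ln\rho)''(t)<\sqrt{q}/(1+\sqrt{q})$ for all $t$. Let $\rho_n=\ln\rho$, $\theta_q=\arccos(1/\sqrt{q})\in(0,\pi/2)$ and $h(\theta)=\dfrac{\sqrt{q}\sin\theta}{\sqrt{q}\cos\theta+1}$. Then for each $\eta\in\mathbb{S}^1$ and each $l\in\{1,2\}$, with $\eta_l=(-1)^{l-1}\eta$, the equation $$\rho_n'(\theta)=h(\theta-\theta_{\eta_l}),\qquad \theta\in\mathbb{R}/(2\pi\mathbb{Z}),$$ has exactly two solutions $\mathcal{T}_{1,l}\eta$ and $\mathcal{T}_{2,l}\eta$, which satisfy $\mathcal{T}_{1,l}\eta-\theta_{\eta_l}\in(\theta_q-\pi,\pi-\theta_q)$ and $\mathcal{T}_{2,l}\eta-\theta_{\eta_l}\in(\pi-\theta_q,\theta_q+\pi)$ (modulo $2\pi$).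
   Context: We identify $\mathbb{S}^1$ with $\mathbb{R}/(2\pi\mathbb{Z})$ via $\theta\mapsto(\cos\theta,\sin\theta)^T$; $\theta_\eta$ denotes the angular coordinate of $\eta\in\mathbb{S}^1$. The function $h$ has poles exactly where $\cos\theta=-1/\sqrt{q}$, i.e. at $\theta=\pm(\pi-\theta_q)$ mod $2\pi$. *)

From Stdlib Require Import Reals.
From Coquelicot Require Import Coquelicot.
Open Scope R_scope.

Definition h_fun (q th : R) : R := sqrt q * sin th / (sqrt q * cos th + 1).

Definition theta_q (q : R) : R := acos (1 / sqrt q).

Definition cong2pi (x y : R) : Prop := exists k : Z, x = y + 2 * PI * IZR k.

(* ρ is C^2 on R (Derive_n ρ 2 is the genuine second derivative
   since ρ and ρ' are differentiable everywhere) *)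
Definition C2 (f : R -> R) : Prop :=
  forall t, ex_derive f t /\ ex_derive (Derive f) t /\ continuous (Derive_n f 2) t.

(* Put s = sqrt q, a = theta_q q, and let g be rho_n' shifted by theta_etal.
   Since h' = s (s + cos) / (s cos + 1)^2 >= s / (1 + s) > g', the difference
   h - g is strictly increasing between consecutive poles of h, so it has at
   most one zero on each of (a - PI, PI - a) and (PI - a, PI + a).  Clearing
   the denominator, g (s cos + 1) - s sin is continuous and equals -+ s sin a
   with alternating signs at the poles a - PI, PI - a, PI + a, so the
   intermediate value theorem gives a zero in each interval.  Periodicity
   reduces every solution to one of these two. *)

From Stdlib Require Import Reals Lra Lia ZArith.
From Coquelicot Require Import Coquelicot.
Open Scope R_scope.

Lemma periodic_IZR {A : Type} (f : R -> A) (T : R) :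
  (forall t, f (t + T) = f t) -> forall (k : Z) t, f (t + T * IZR k) = f t.
Proof.
  intros Hper.
  assert (HN : forall (n : nat) t, f (t + T * INR n) = f t).
  { induction n as [|n IH]; intro t.
    - now rewrite Rmult_0_r, Rplus_0_r.
    - rewrite S_INR, <- (IH t), <- (Hper (t + T * INR n)). f_equal. ring. }
  intros k t. destruct (Z.le_ge_cases 0 k) as [Hk|Hk].
  - rewrite <- (Z2Nat.id k Hk), <- INR_IZR_INZ. apply HN.
  - rewrite <- (Z.opp_involutive k), opp_IZR, <- (Z2Nat.id (- k)) by lia.
    rewrite <- INR_IZR_INZ, <- (HN (Z.to_nat (- k)) (t + T * - INR (Z.to_nat (- k)))).
    f_equal. ring.
Qed.

Lemma exists_shift_into_window (T lo u : R) :
  0 < T -> exists k : Z, lo < u + T * IZR k <= lo + T.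
Proof.
  intros HT.
  set (r := (lo + T - u) / T).
  destruct (archimed r) as [Hup1 Hup2].
  exists (up r - 1)%Z.
  rewrite minus_IZR.
  assert (Er : T * r = lo + T - u) by (unfold r; field; lra).
  split; [apply Rle_lt_trans with (u + T * (r - 1)) | apply Rle_trans with (u + T * r)];
    try nra; lra.
Qed.

Lemma Derive_periodic (f : R -> R) (T : R) :
  (forall t, f (t + T) = f t) -> forall t, Derive f (t + T) = Derive f t.
Proof.
  intros Hper t. unfold Derive. f_equal. apply Lim_ext. intro y.
  now rewrite Rplus_assoc, (Rplus_comm T y), <- Rplus_assoc, !Hper.
Qed.

Lemma is_derive_shift (f f' : R -> R) (c x : R) :
  is_derive f (x + c) (f' (x + c)) -> is_derive (fun u => f (u + c)) x (f' (x + c)).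
Proof.
  intros Hf.
  replace (f' (x + c)) with (1 * f' (x + c)) by ring.
  apply (is_derive_comp f (fun u => u + c)); [exact Hf|].
  auto_derive; auto; ring.
Qed.

Lemma Derive_ln_comp (f : R -> R) (x : R) :
  0 < f x -> ex_derive f x -> Derive (fun t => ln (f t)) x = Derive f x / f x.
Proof.
  intros Hpos Hf. apply is_derive_unique. auto_derive.
  - now split.
  - now rewrite Rmult_1_l.
Qed.

Lemma ex_derive_Derive_ln_comp (f : R -> R) (x : R) :
  (forall t, 0 < f t) -> (forall t, ex_derive f t) -> ex_derive (Derive f) x ->
  ex_derive (Derive (fun t => ln (f t))) x.
Proof.
  intros Hpos Hf Hf'.
  apply (ex_derive_ext (fun t => Derive f t / f t)).
  - intro t. symmetry. now apply Derive_ln_comp.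
  - auto_derive. repeat split; auto. apply Rgt_not_eq, Hpos.
Qed.

Lemma h_slope_lower_bound (s c : R) :
  1 < s -> -1 <= c <= 1 -> s * c + 1 <> 0 ->
  s / (1 + s) <= s * (s + c) / (s * c + 1) ^ 2.
Proof.
  intros Hs Hc Hd.
  assert (Hden : 0 < (s * c + 1) ^ 2) by now apply pow2_gt_0.
  assert (Hdiff : s * (s + c) / (s * c + 1) ^ 2 - s / (1 + s)
                  = s * (s ^ 2 * (1 - c ^ 2) + (s - 1) * (1 - c)) / ((s * c + 1) ^ 2 * (1 + s)))
    by (field; split; lra).
  enough (0 <= s * (s ^ 2 * (1 - c ^ 2) + (s - 1) * (1 - c)) / ((s * c + 1) ^ 2 * (1 + s)))
    by lra.
  apply Rdiv_le_0_compat; [|apply Rmult_lt_0_compat; lra].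
  apply Rmult_le_pos; [lra|]. apply Rplus_le_le_0_compat; apply Rmult_le_pos; nra.
Qed.

Lemma is_derive_h (s u : R) :
  s * cos u + 1 <> 0 ->
  is_derive (fun u => s * sin u / (s * cos u + 1)) u (s * (s + cos u) / (s * cos u + 1) ^ 2).
Proof.
  intros Hd. auto_derive; [exact Hd|].
  assert (Hpyth : sin u ^ 2 + cos u ^ 2 = 1)
    by (rewrite <- (sin2_cos2 u); unfold Rsqr; ring).
  replace (s + cos u) with (s * (sin u ^ 2 + cos u ^ 2) + cos u) by (rewrite Hpyth; ring).
  field. exact Hd.
Qed.

Lemma cos_lt_of_abs_lt (b y : R) : b <= PI -> - b < y < b -> cos b < cos y.
Proof.
  intros Hb Hy. destruct (Rle_or_lt 0 y) as [Hy0|Hy0].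
  - apply cos_decreasing_1; lra.
  - rewrite <- (cos_neg y). apply cos_decreasing_1; lra.
Qed.

Lemma cos_plus_2PI (t : R) : cos (t + 2 * PI) = cos t.
Proof. rewrite cos_plus, cos_2PI, sin_2PI. ring. Qed.

Lemma sin_plus_2PI (t : R) : sin (t + 2 * PI) = sin t.
Proof. rewrite sin_plus, cos_2PI, sin_2PI. ring. Qed.

Section PeriodicSolutions.

Variables (s : R) (g g' : R -> R).
Hypothesis Hs : 1 < s.
Hypothesis Hg : forall x, is_derive g x (g' x).
Hypothesis Hg'_lt : forall x, g' x < s / (1 + s).
Hypothesis Hg_per : forall x, g (x + 2 * PI) = g x.

Let a := acos (1 / s).
Let G u := s * sin u / (s * cos u + 1) - g u.
Let sol u := s * cos u + 1 <> 0 /\ g u = s * sin u / (s * cos u + 1).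

Lemma inv_s_bounds : 0 < 1 / s < 1.
Proof.
  split; [apply Rdiv_lt_0_compat; lra|].
  apply Rmult_lt_reg_r with s; [lra|]. field_simplify; lra.
Qed.

Lemma cos_a : cos a = 1 / s.
Proof. apply cos_acos. pose proof inv_s_bounds. lra. Qed.

Lemma a_bounds : 0 < a < PI.
Proof. apply acos_bound_lt. pose proof inv_s_bounds. lra. Qed.

Lemma den_pos_near_0 x : a - PI < x < PI - a -> 0 < s * cos x + 1.
Proof.
  intros Hx. pose proof a_bounds as Ha.
  assert (Hcos : cos (PI - a) < cos x) by (apply cos_lt_of_abs_lt; lra).
  rewrite Rtrigo_facts.cos_pi_minus, cos_a in Hcos.
  apply Rmult_lt_compat_l with (r := s) in Hcos; [|lra].
  replace (s * - (1 / s)) with (-1) in Hcos by (field; lra). lra.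
Qed.

Lemma den_neg_near_PI x : PI - a < x < PI + a -> s * cos x + 1 < 0.
Proof.
  intros Hx. pose proof a_bounds as Ha.
  assert (Hcos : cos a < cos (x - PI)) by (apply cos_lt_of_abs_lt; lra).
  rewrite cos_minus, cos_PI, sin_PI, cos_a in Hcos.
  apply Rmult_lt_compat_l with (r := s) in Hcos; [|lra].
  replace (s * (1 / s)) with 1 in Hcos by (field; lra). nra.
Qed.

Lemma G_increasing u1 u2 :
  u1 < u2 -> (forall x, u1 <= x <= u2 -> s * cos x + 1 <> 0) -> G u1 < G u2.
Proof.
  intros Hu Hd.
  apply (incr_function_le G u1 u2 (fun x => s * (s + cos x) / (s * cos x + 1) ^ 2 - g' x));
    try (simpl; lra).
  - intros x Hx1 Hx2. apply (is_derive_minus (fun u => s * sin u / (s * cos u + 1)) g).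
    + apply is_derive_h, Hd; simpl in *; lra.
    + apply Hg.
  - intros x Hx1 Hx2.
    pose proof (h_slope_lower_bound s (cos x) Hs (COS_bound x) (Hd x (conj Hx1 Hx2))).
    specialize (Hg'_lt x). lra.
Qed.

Lemma G_root_unique lo hi u1 u2 :
  (forall x, lo < x < hi -> s * cos x + 1 <> 0) ->
  lo < u1 < hi -> lo < u2 < hi -> G u1 = 0 -> G u2 = 0 -> u1 = u2.
Proof.
  intros Hd H1 H2 E1 E2.
  destruct (total_order_T u1 u2) as [[Hlt|Heq]|Hgt]; [exfalso| exact Heq | exfalso].
  - assert (G u1 < G u2) by (apply G_increasing; [|intros; apply Hd]; lra). lra.
  - assert (G u2 < G u1) by (apply G_increasing; [|intros; apply Hd]; lra). lra.
Qed.

Lemma G_root_between lo hi :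
  lo < hi -> s * cos lo + 1 = 0 -> s * cos hi + 1 = 0 -> sin lo * sin hi < 0 ->
  (forall x, lo < x < hi -> s * cos x + 1 <> 0) ->
  exists z, lo < z < hi /\ G z = 0.
Proof.
  intros Hlh Hlo Hhi Hsin Hd.
  set (K := fun u => g u * (s * cos u + 1) - s * sin u).
  assert (HK : continuity K).
  { intro x. apply continuity_pt_filterlim, (ex_derive_continuous K).
    unfold K. auto_derive. exists (g' x). apply Hg. }
  assert (Klo : K lo = - s * sin lo) by (unfold K; rewrite Hlo; ring).
  assert (Khi : K hi = - s * sin hi) by (unfold K; rewrite Hhi; ring).
  destruct (IVT_cor K lo hi HK) as [z [Hz Kz]]; [lra| rewrite Klo, Khi; nra |].
  assert (Hz' : lo < z < hi).
  { split; apply Rnot_le_lt; intro Hle;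
      [replace z with lo in Kz by lra; rewrite Klo in Kz
      |replace z with hi in Kz by lra; rewrite Khi in Kz];
      apply Rmult_integral in Kz; nra. }
  exists z. split; [exact Hz'|].
  unfold G. unfold K in Kz. specialize (Hd z Hz').
  apply Rminus_diag_eq. apply (Rmult_eq_reg_r (s * cos z + 1)); [|exact Hd].
  field_simplify; lra.
Qed.

Lemma den_periodic (k : Z) u : s * cos (u + 2 * PI * IZR k) + 1 = s * cos u + 1.
Proof. now rewrite (periodic_IZR cos _ cos_plus_2PI). Qed.

Lemma G_periodic (k : Z) u : G (u + 2 * PI * IZR k) = G u.
Proof.
  unfold G. now rewrite (periodic_IZR g _ Hg_per), (periodic_IZR cos _ cos_plus_2PI),
    (periodic_IZR sin _ sin_plus_2PI).
Qed.

Theorem h_eq_g_solutions :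
  exists z1 z2, sol z1 /\ sol z2 /\ a - PI < z1 < PI - a /\ PI - a < z2 < PI + a /\
    (forall u, sol u -> cong2pi u z1 \/ cong2pi u z2).
Proof.
  pose proof a_bounds as Ha. pose proof PI_RGT_0 as Hpi.
  assert (Hsa : 0 < sin a) by (apply sin_gt_0; lra).
  assert (Hpoles : s * cos (a - PI) + 1 = 0 /\ s * cos (PI - a) + 1 = 0
                   /\ s * cos (PI + a) + 1 = 0).
  { rewrite !cos_minus, cos_plus, cos_PI, sin_PI, cos_a. repeat split; field; lra. }
  assert (Hsin : sin (a - PI) = - sin a /\ sin (PI - a) = sin a /\ sin (PI + a) = - sin a).
  { rewrite !sin_minus, sin_plus, cos_PI, sin_PI. repeat split; ring. }
  assert (Hsol : forall u, s * cos u + 1 <> 0 -> G u = 0 -> sol u)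
    by (unfold G, sol; intros u Hd Hu; split; lra).
  assert (Hd1 : forall x, a - PI < x < PI - a -> s * cos x + 1 <> 0)
    by (intros x Hx; pose proof (den_pos_near_0 x Hx); lra).
  assert (Hd2 : forall x, PI - a < x < PI + a -> s * cos x + 1 <> 0)
    by (intros x Hx; pose proof (den_neg_near_PI x Hx); lra).
  destruct (G_root_between (a - PI) (PI - a)) as [z1 [Hz1 G1]]; try easy; try lra; [nra|].
  destruct (G_root_between (PI - a) (PI + a)) as [z2 [Hz2 G2]]; try easy; try lra; [nra|].
  exists z1, z2. repeat split; try lra; try now apply Hsol; auto.
  intros u [Hd Hu].
  destruct (exists_shift_into_window (2 * PI) (a - PI) u) as [k [Hk1 Hk2]]; [lra|].
  set (v := u + 2 * PI * IZR k) in *.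
  assert (Hdv : s * cos v + 1 <> 0) by (unfold v; now rewrite den_periodic).
  assert (Gv : G v = 0) by (unfold v; rewrite G_periodic; unfold G; lra).
  assert (Hcong : forall z, v = z -> cong2pi u z)
    by (intros z <-; exists (- k)%Z; unfold v; rewrite opp_IZR; ring).
  destruct (Rtotal_order v (PI - a)) as [Hlt|[Heq|Hgt]].
  - left. apply Hcong, (G_root_unique (a - PI) (PI - a)); auto; lra.
  - exfalso. apply Hdv. rewrite Heq. easy.
  - destruct (Req_dec v (PI + a)) as [Heq|Hne].
    + exfalso. apply Hdv. rewrite Heq. easy.
    + right. apply Hcong, (G_root_unique (PI - a) (PI + a)); auto; lra.
Qed.

End PeriodicSolutions.

Theorem lemma4 (q : R) (rho : R -> R)
  (Hq : 1 < q)
  (Hpos : forall t, 0 < rho t)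
  (Hper : forall t, rho (t + 2 * PI) = rho t)
  (HC2 : C2 rho)
  (Hconv : forall t, Derive_n (fun s => ln (rho s)) 2 t < sqrt q / (1 + sqrt q))
  (theta_eta : R) (l : nat) (Hl : l = 1%nat \/ l = 2%nat) :
  let theta_etal := theta_eta + INR (l - 1) * PI in
  let sol := fun th => sqrt q * cos (th - theta_etal) + 1 <> 0 /\
               Derive (fun s => ln (rho s)) th = h_fun q (th - theta_etal) in
  exists T1 T2 : R,
    sol T1 /\ sol T2 /\
    theta_q q - PI < T1 - theta_etal < PI - theta_q q /\
    PI - theta_q q < T2 - theta_etal < theta_q q + PI /\
    (forall th, sol th -> cong2pi th T1 \/ cong2pi th T2).
Proof.
  (* The argument works for every shift theta_etal. *)
  intros te sol.
  set (L := fun t => ln (rho t)).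
  assert (Hs : 1 < sqrt q) by (rewrite <- sqrt_1; apply sqrt_lt_1_alt; lra).
  assert (HL' : forall x, is_derive (Derive L) x (Derive_n L 2 x))
    by (intro x; apply Derive_correct, ex_derive_Derive_ln_comp; apply HC2 || apply Hpos).
  assert (HLper : forall x, Derive L (x + 2 * PI) = Derive L x)
    by (apply Derive_periodic; intro t; unfold L; now rewrite Hper).
  destruct (h_eq_g_solutions (sqrt q) (fun u => Derive L (u + te))
              (fun u => Derive_n L 2 (u + te)) Hs)
    as [z1 [z2 [[Hd1 E1] [[Hd2 E2] [I1 [I2 Hcl]]]]]].
  - intro x. apply is_derive_shift, HL'.
  - intro x. apply Hconv.
  - intro x. now rewrite Rplus_assoc, (Rplus_comm (2 * PI) te), <- Rplus_assoc, HLper.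
  - exists (z1 + te), (z2 + te). unfold sol, h_fun, theta_q.
    replace (z1 + te - te) with z1 by ring. replace (z2 + te - te) with z2 by ring.
    repeat split; try easy; try lra.
    intros th [Hd Hth].
    destruct (Hcl (th - te)) as [[k Hk]|[k Hk]].
    + split; [exact Hd|]. now replace (th - te + te) with th by ring.
    + left. exists k. lra.
    + right. exists k. lra.
Qed.
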